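(* Let $X,Y$ be compact metric spaces and let $\mathcal G\subset\mathrm{Homeo}(X)$, $\mathcal H\subset\mathrm{Homeo}(Y)$ be finitely generated pseudogroups strongly isomorphic via a homeomorphism $\varphi:X\to Y$; let $\mathcal G_1$ be a finite generating set of $\mathcal G$ and $\mathcal H_1=\{\varphi\circ g\circ\varphi^{-1}:g\in\mathcal G_1\}$. If a Borel probability measure $\mu$ on $X$ is $(\mathcal G,\mathcal G_1)$-expansive with some constant $\eta>0$, then there exists $\delta>0$ such that $\varphi_*\mu$ is $(\mathcal H,\mathcal H_1)$-expansive with constant $\delta$.
   Context: $\mathrm{Homeo}(X)$: homeomorphisms $g:D_g\to R_g$ between open subsets of $X$, composed on natural domains $D_{h\circ g}=g^{-1}(D_h)$. A pseudogroup is a subset of $\mathrm{Homeo}(X)$ containing $\mathrm{id}_X$, closed under composition, inversion, restriction to open subsets, and gluing along open covers of the domain; $\Gamma$ generates $\mathcal G$ if $\bigcup_{g\in\Gamma}(D_g\cup R_g)=X$ and $\mathcal G$ is exactly the set of $g\in\mathrm{Homeo}(X)$ locally equal near each point of $D_g$ to a finite composition of elements of $\Gamma$ and their inverses. $\mathcal G,\mathcal H$ are strongly isomorphic via $\varphi$ if for every $f\in\mathrm{Homeo}(X)$: $\varphi\circ f\circ\varphi^{-1}\in\mathcal H$ iff $f\in\mathcal G$. For a pseudogroup with finite generating set $\Gamma$: $\Gamma_n=\{g_1\circ\cdots\circ g_n:g_i\in\Gamma\}$, $\Gamma_n^x=\{g\in\Gamma_n:x\in D_g\}$, $\Phi_\delta(x)=\{y: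 d(g(x),g(y))\le\delta\ \forall n\in\mathbb N,\ \forall g\in\Gamma_n^x\cap\Gamma_n^y\}$. A Borel probability measure $\mu$ is expansive with constant $\delta$ for $(\mathcal G,\Gamma)$ if $\mu(\Phi_\delta(x))=0$ for every point $x$. $\varphi_*\mu=\mu\circ\varphi^{-1}$. *)

From HB Require Import structures.
From mathcomp Require Import all_boot all_order all_algebra.
From mathcomp Require Import all_classical all_reals all_analysis.
From Stdlib Require List.
Set Implicit Arguments. Unset Strict Implicit. Unset Printing Implicit Defensive.
Import Order.TTheory GRing.Theory Num.Theory.
Local Open Scope classical_set_scope.
Local Open Scope ring_scope.

Definition borel (T : ptopologicalType) := g_sigma_algebraType (@open T).

(* metric spaces with a distinguished point (needed to build the Borel
   measurable type; harmless since a probability measure forces X <> set0) *)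
#[short(type="pmetricType")]
HB.structure Definition PointedMetric (K : numDomainType) :=
  { M of Metric K M & Pointed M }.

(* An element of Homeo(X): homeomorphism fn : dom -> ran between open sets,
   with inverse inv.  Values of fn outside dom (and inv outside ran) are
   irrelevant: every notion below only looks at them on dom (resp. ran). *)
Record phomeo (X : topologicalType) := PHomeo {
  dom : set X ;
  ran : set X ;
  fn : X -> X ;
  inv : X -> X ;
  dom_open : open dom ;
  ran_open : open ran ;
  fn_maps : forall x, dom x -> ran (fn x) ;
  inv_maps : forall y, ran y -> dom (inv y) ;
  inv_fn : forall x, dom x -> inv (fn x) = x ;
  fn_inv : forall y, ran y -> fn (inv y) = y ;
  fn_cont : {within dom, continuous fn} ;
  inv_cont : {within ran, continuous inv}
}.

Section PG.
Variable X : topologicalType.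
Implicit Types (g h k : phomeo X) (G : phomeo X -> Prop).

Definition is_id k := (forall x, dom k x) /\ (forall x, fn k x = x).
Definition is_comp h g k :=
  (forall x, dom k x <-> (dom g x /\ dom h (fn g x))) /\
  (forall x, dom k x -> fn k x = fn h (fn g x)).
Definition is_inv g k :=
  (forall x, dom k x <-> ran g x) /\ (forall x, dom k x -> fn k x = inv g x).
Definition is_restr g k :=
  (forall x, dom k x -> dom g x) /\ (forall x, dom k x -> fn k x = fn g x).

Definition pseudogroup G :=
  (forall k, is_id k -> G k) /\
  (forall g h k, G g -> G h -> is_comp h g k -> G k) /\
  (forall g k, G g -> is_inv g k -> G k) /\
  (forall g k, G g -> is_restr g k -> G k) /\
  (forall k, (forall x, dom k x -> exists k', G k' /\ is_restr k k' /\ dom k' x)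
     -> G k).

(* words in the generators and their inverses: (g, true) stands for g,
   (g, false) for g^-1; the word [a1; ...; an] denotes a1 o ... o an
   on its natural domain. *)
Definition letter_dom (a : phomeo X * bool) := if a.2 then dom a.1 else ran a.1.
Definition letter_fn (a : phomeo X * bool) := if a.2 then fn a.1 else inv a.1.

Fixpoint wfn (w : seq (phomeo X * bool)) : X -> X :=
  match w with
  | [::] => id
  | a :: w' => fun x => letter_fn a (wfn w' x)
  end.
Fixpoint wdom (w : seq (phomeo X * bool)) : set X :=
  match w with
  | [::] => setT
  | a :: w' => fun x => wdom w' x /\ letter_dom a (wfn w' x)
  end.

Definition generates G (Gam : seq (phomeo X)) :=
  (forall x, exists2 g, List.In g Gam & (dom g x \/ ran g x)) /\
  (forall g, G g <->
     forall x, dom g x ->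
       exists w : seq (phomeo X * bool),
         List.Forall (fun a => List.In a.1 Gam) w /\
         exists U : set X, open U /\ U x /\ U `<=` dom g /\ U `<=` wdom w /\
           forall y, U y -> fn g y = wfn w y).

Definition finitely_generated G := exists Gam, generates G Gam.

Definition pos_word (w : seq (phomeo X)) := [seq (g, true) | g <- w].
Definition Gamma_n (Gam : seq (phomeo X)) (n : nat) (w : seq (phomeo X)) :=
  size w = n /\ List.Forall (fun g => List.In g Gam) w.
End PG.

Section Conj.
Variables (X Y : topologicalType) (phi : X -> Y) (psi : Y -> X).
(* h = phi o f o phi^-1  (psi is the inverse of phi) *)
Definition is_conj (f : phomeo X) (h : phomeo Y) :=
  (forall y, dom h y <-> dom f (psi y)) /\
  (forall y, dom h y -> fn h y = phi (fn f (psi y))).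

Definition strongly_isomorphic (G : phomeo X -> Prop) (H : phomeo Y -> Prop) :=
  forall f h, is_conj f h -> (H h <-> G f).
End Conj.

Section Exp.
Variables (R : realType) (X : metricType R).

Definition Phi (Gam : seq (phomeo X)) (delta : R) (x : X) : set X :=
  [set y | forall (n : nat) (w : seq (phomeo X)), Gamma_n Gam n w ->
     wdom (pos_word w) x -> wdom (pos_word w) y ->
     mdist (wfn (pos_word w) x) (wfn (pos_word w) y) <= delta].

(* expansive with constant delta for (G, Gam); depends only on Gam *)
Definition expansive (Gam : seq (phomeo X)) (mu : set X -> \bar R) (delta : R) :=
  forall x, mu (Phi Gam delta x) = 0%E.
End Exp.

From HB Require Import structures.
From mathcomp Require Import all_boot all_order all_algebra.
From mathcomp Require Import all_classical all_reals all_analysis.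
From mathcomp Require Import lra.
From Stdlib Require List.
Set Implicit Arguments. Unset Strict Implicit. Unset Printing Implicit Defensive.
Import Order.TTheory GRing.Theory Num.Theory.
Local Open Scope classical_set_scope.
Local Open Scope ring_scope.

(* By compactness, phi^-1 is uniformly continuous: some delta > 0 satisfies
   d(y, y') <= delta -> d(phi^-1 y, phi^-1 y') <= eta.  The words of length n
   in H1 are exactly the phi-conjugates of the words of length n in G1, so
   phi^-1 maps Phi_delta(y) into Phi_eta(phi^-1 y).  The sets Phi are closed,
   hence Borel, and phi_* mu (Phi_delta(y)) <= mu (Phi_eta(phi^-1 y)) = 0. *)

Section Topology.
Variables T U : topologicalType.

Lemma open_setI_preimage (D : set T) (f : T -> U) (B : set U) :
  open D -> {in D, continuous f} -> open B -> open (D `&` f @^-1` B).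
Proof.
rewrite !openE => oD fc oB x [Dx Bfx].
apply: filterI; first exact: oD.
by apply: fc; [rewrite inE | exact: oB].
Qed.

Lemma closed_implies_preimage (D : set T) (f : T -> U) (C : set U) :
  open D -> {in D, continuous f} -> closed C -> closed [set y | D y -> C (f y)].
Proof.
move=> oD fc cC; rewrite -openC.
have -> : ~` [set y | D y -> C (f y)] = D `&` f @^-1` (~` C).
  by apply/seteqP; split => y /= => [/not_implyP | [Dy nCy]] // /(_ Dy).
by apply: open_setI_preimage; rewrite ?openC.
Qed.

End Topology.

Lemma closed_borel_measurable (T : ptopologicalType) (A : set T) :
  closed A -> measurable (A : set (borel T)).
Proof.
move=> cA; rewrite -[A]setCK; apply: measurableC; apply: sub_sigma_algebra.
by rewrite /= openC.
Qed.

Section Metric.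
Variable R : realType.

Lemma closed_mdist_le (X : metricType R) (a : X) (r : R) :
  closed [set b | mdist a b <= r].
Proof.
rewrite -openC openE => z /= /negP; rewrite -ltNge => rz.
have e_gt0 : 0 < mdist a z - r by rewrite subr_gt0.
apply: filterS (nbhsx_ballx z _ e_gt0) => y; rewrite ballEmdist /= => zy ay.
have := metric_triangle a y z; rewrite metric_sym in zy; lra.
Qed.

Lemma compact_unif_continuous_mdist (Y X : metricType R) (f : Y -> X) :
  compact [set: Y] -> continuous f -> forall e, 0 < e ->
  exists2 d, 0 < d & forall u v, mdist u v <= d -> mdist (f u) (f v) <= e.
Proof.
move=> /compact_near_coveringP cY fc e e_gt0.
have near0 : \forall d \near (0 : R)^'+, [set: Y] `<=`
    [set u | forall v, mdist u v <= d -> mdist (f u) (f v) <= e].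
  apply: cY => u _.
  have e2_gt0 : 0 < e / 2 by rewrite divr_gt0.
  have [r r_gt0 fr] := (metricType_numDomainType.nbhs_mdistP _ _).1
    (metricType_numDomainType.cvgr_dist_lt (fc u) e2_gt0).
  have r2_gt0 : 0 < r / 2 by rewrite divr_gt0.
  exists ([set t | mdist u t < r / 2], [set d | d < r / 2]).
    split; last exact: nbhs_right_lt.
    by have := nbhsx_ballx u _ r2_gt0; rewrite ballEmdist.
  move=> [u' d] /= [uu' dr] v u'v.
  have fuu' : mdist (f u) (f u') < e / 2 by apply: fr => /=; lra.
  have fuv : mdist (f u) (f v) < e / 2.
    by apply: fr => /=; have := metric_triangle u u' v; lra.
  have := metric_triangle (f u') (f u) (f v); rewrite metric_sym in fuu'; lra.
have [d [fd d_gt0]] := filter_ex (filterI near0 (nbhs_right_gt 0)).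
by exists d => // u v; apply: fd.
Qed.

End Metric.

Lemma Forall2_In_l (A B : Type) (Rl : A -> B -> Prop) (s : seq A) (t : seq B) a :
  List.Forall2 Rl s t -> List.In a s -> exists2 b, List.In b t & Rl a b.
Proof.
elim => [|a' b' s' t' ab' _ IH] //= [<- | /IH [b bt ab]].
  by exists b' => //; left.
by exists b => //; right.
Qed.

Section Words.
Variable X : topologicalType.
Implicit Types w : seq (phomeo X).

Lemma continuous_wfn_pos_word w :
  {in wdom (pos_word w), continuous (wfn (pos_word w))}.
Proof.
elim: w => [|g w IH] z /=; first by move=> _; exact: cvg_id.
rewrite inE => -[wz gz].
apply: (@continuous_comp _ _ _ (wfn (pos_word w)) (fn g)).
  by apply: IH; rewrite inE.
have := @fn_cont _ g; rewrite continuous_open_subspace; last exact: dom_open.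
by apply; rewrite inE.
Qed.

Lemma open_wdom_pos_word w : open (wdom (pos_word w)).
Proof.
elim: w => [|g w IH] /=; first exact: openT.
exact: open_setI_preimage IH (@continuous_wfn_pos_word w) (dom_open g).
Qed.

Lemma Gamma_n_Forall2 (Y : topologicalType) (Rl : phomeo X -> phomeo Y -> Prop)
    (Gam : seq (phomeo X)) (Gam' : seq (phomeo Y)) n w :
  List.Forall2 Rl Gam Gam' -> Gamma_n Gam n w ->
  exists2 w', Gamma_n Gam' n w' & List.Forall2 Rl w w'.
Proof.
move=> GG' [<-]; elim=> [|g {}w gG _ [w' [sw' w'G'] ww']] /=.
  by exists [::]; [split | constructor].
have [h hG' gh] := Forall2_In_l GG' gG.
by exists (h :: w'); [split; [rewrite /= sw' | constructor] | constructor].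
Qed.

End Words.

Lemma closed_Phi (R : realType) (X : metricType R) (Gam : seq (phomeo X))
    (delta : R) (x : X) :
  closed (Phi Gam delta x).
Proof.
have -> : Phi Gam delta x =
    \bigcap_(nw in [set nw | Gamma_n Gam nw.1 nw.2 /\ wdom (pos_word nw.2) x])
      [set y | wdom (pos_word nw.2) y ->
        mdist (wfn (pos_word nw.2) x) (wfn (pos_word nw.2) y) <= delta].
  apply/seteqP; split => y /= => [Py [n w] /= [Gw wx] | Py n w Gw wx].
    exact: Py Gw wx.
  exact: (Py (n, w)).
apply: closed_bigI => -[n w] _ /=.
exact (closed_implies_preimage (open_wdom_pos_word w)
  (@continuous_wfn_pos_word _ w) (@closed_mdist_le _ _ _ _)).
Qed.

Lemma pos_word_conj (X Y : topologicalType) (phi : X -> Y) (psi : Y -> X)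
    (psiK : cancel phi psi) (phiK : cancel psi phi)
    (w : seq (phomeo X)) (w' : seq (phomeo Y)) :
  List.Forall2 (is_conj phi psi) w w' -> forall y,
  (wdom (pos_word w') y <-> wdom (pos_word w) (psi y)) /\
  (wdom (pos_word w') y -> wfn (pos_word w') y = phi (wfn (pos_word w) (psi y))).
Proof.
elim => [|g h v v' [domh fnh] _ IH] y /=; first by split => // _; rewrite phiK.
have [domw' fnw'] := IH y.
rewrite /letter_dom /letter_fn /=; split; last first.
  by move=> [w'y hy]; rewrite fnh // fnw' // psiK.
split=> [[w'y hy] | [wy gy]].
  split; first exact/domw'.
  by move: hy; rewrite fnw' // => /domh; rewrite psiK.
have w'y : wdom (pos_word v') y by exact/domw'.
by split=> //; apply/domh; rewrite fnw' // psiK.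
Qed.

Lemma preimage_Phi_conj (R : realType) (X Y : metricType R)
    (phi : X -> Y) (psi : Y -> X) (psiK : cancel phi psi) (phiK : cancel psi phi)
    (G1 : seq (phomeo X)) (H1 : seq (phomeo Y)) (delta eta : R) (y : Y) :
  List.Forall2 (is_conj phi psi) G1 H1 ->
  (forall u v, mdist u v <= delta -> mdist (psi u) (psi v) <= eta) ->
  phi @^-1` Phi H1 delta y `<=` Phi G1 eta (psi y).
Proof.
move=> G1H1 psi_unif x Px n w Gw wy wx.
have [w' Hw' ww'] := Gamma_n_Forall2 G1H1 Gw.
have conj := pos_word_conj psiK phiK ww'.
have w'y : wdom (pos_word w') y by apply/(conj y).1.
have w'x : wdom (pos_word w') (phi x) by apply/(conj (phi x)).1; rewrite psiK.
move: (Px n w' Hw' w'y w'x); rewrite (conj y).2 // (conj (phi x)).2 // psiK.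
by move=> /psi_unif; rewrite !psiK.
Qed.

Theorem mainTheorem13 (R : realType) (X Y : pmetricType R)
  (hX : compact [set: X]) (hY : compact [set: Y])
  (phi : X -> Y) (psi : Y -> X)
  (phi_cont : continuous phi) (psi_cont : continuous psi)
  (psiK : cancel phi psi) (phiK : cancel psi phi)
  (G : phomeo X -> Prop) (H : phomeo Y -> Prop)
  (pgG : pseudogroup G) (pgH : pseudogroup H)
  (fgG : finitely_generated G) (fgH : finitely_generated H)
  (iso : strongly_isomorphic phi psi G H)
  (G1 : seq (phomeo X)) (genG1 : generates G G1)
  (H1 : seq (phomeo Y)) (defH1 : List.Forall2 (is_conj phi psi) G1 H1)
  (mu : probability (borel X) R) (eta : R) (eta_gt0 : 0 < eta)
  (mu_exp : expansive G1 mu eta) :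
  exists2 delta : R, 0 < delta &
    expansive H1 (pushforward mu (phi : borel X -> borel Y)) delta.
Proof.
have [delta delta_gt0 psi_unif] :=
  compact_unif_continuous_mdist hY psi_cont eta_gt0.
exists delta => // y; rewrite /pushforward.
have mPre : measurable (phi @^-1` Phi H1 delta y : set (borel X)).
  apply: closed_borel_measurable.
  by apply: (continuous_closedP _).1 phi_cont _ _; exact: closed_Phi.
have mPhi : measurable (Phi G1 eta (psi y) : set (borel X)).
  by apply: closed_borel_measurable; exact: closed_Phi.
apply/eqP; rewrite -measure_le0 -(mu_exp (psi y)).
exact: (le_measure mu (mem_set mPre) (mem_set mPhi))
  (preimage_Phi_conj psiK phiK defH1 psi_unif).
Qed.
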